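(* Let $\varepsilon>0$ and $\boldsymbol\alpha(\mathbf{x},\mathbf{y})=\frac{\mathbf{y}-\mathbf{x}}{|\mathbf{y}-\mathbf{x}|^2}\chi_{B_\varepsilon(\mathbf{x})}(\mathbf{y})$ for $\mathbf{x},\mathbf{y}\in\mathbb{R}^3$. For $\mathbf{u}:\mathbb{R}^3\to\mathbb{R}^3$ let $(\mathcal{G}^*_{\boldsymbol\alpha}\mathbf{u})(\mathbf{x},\mathbf{y})=-\big(\mathbf{u}(\mathbf{y})-\mathbf{u}(\mathbf{x})\big)\cdot\boldsymbol\alpha(\mathbf{x},\mathbf{y})$ and $(\mathcal{D}^*_{\boldsymbol\alpha}\mathbf{u})(\mathbf{x},\mathbf{y})=-\big(\mathbf{u}(\mathbf{y})-\mathbf{u}(\mathbf{x})\big)\otimes\boldsymbol\alpha(\mathbf{x},\mathbf{y})$; for a scalar two-point function $\eta$ let $(\mathcal{G}_{\boldsymbol\alpha}\eta)(\mathbf{x})=\int_{\mathbb{R}^3}\big(\eta(\mathbf{y},\mathbf{x})+\eta(\mathbf{x},\mathbf{y})\big)\boldsymbol\alpha(\mathbf{x},\mathbf{y})\,d\mathbf{y}$, and for a tensor-valued two-point function $\boldsymbol\Psi$ let $(\mathcal{D}_{\boldsymbol\alpha}\boldsymbol\Psi)(\mathbf{x})=\int_{\mathbb{R}^3}\big(\boldsymbol\Psi(\mathbf{y},\mathbf{x})+\boldsymbol\Psi(\mathbf{x},\mathbf{y})\big)\boldsymbol\alpha(\mathbf{x},\mathbf{y})\,d\mathbf{y}$.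 Then for every scalar function $c$ on $\mathbb{R}^3$ and every $\mathbf{u}$ (with the integrals convergent), $\mathcal{D}_{\boldsymbol\alpha}\big(c(\mathcal{D}^*_{\boldsymbol\alpha}\mathbf{u})^T\big)=\mathcal{G}_{\boldsymbol\alpha}(c\,\mathcal{G}^*_{\boldsymbol\alpha}\mathbf{u})$, where $(c(\mathcal{D}^*_{\boldsymbol\alpha}\mathbf{u})^T)(\mathbf{x},\mathbf{y})=c(\mathbf{x})(\mathcal{D}^*_{\boldsymbol\alpha}\mathbf{u})(\mathbf{x},\mathbf{y})^T$ and $(c\,\mathcal{G}^*_{\boldsymbol\alpha}\mathbf{u})(\mathbf{x},\mathbf{y})=c(\mathbf{x})(\mathcal{G}^*_{\boldsymbol\alpha}\mathbf{u})(\mathbf{x},\mathbf{y})$.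
   Context: $B_\varepsilon(\mathbf{x})$ is the open ball of radius $\varepsilon$ about $\mathbf{x}$, $\chi_A$ the indicator of $A$, and $(\mathbf{a}\otimes\mathbf{b})_{ij}=a_ib_j$. *)

From HB Require Import structures.
From mathcomp Require Import all_boot all_order all_algebra.
From mathcomp Require Import all_classical all_reals all_analysis.
Set Implicit Arguments. Unset Strict Implicit. Unset Printing Implicit Defensive.
Import Order.TTheory GRing.Theory Num.Theory.
Local Open Scope ring_scope.

Section Defs3.
Variable R : realType.

(* Euclidean inner product and norm on R^3 (the library norm on matrices is the max-norm). *)
Definition dot3 (a b : 'cV[R]_3) : R := \sum_(i < 3) a i 0 * b i 0.
Definition enorm3 (a : 'cV[R]_3) : R := Num.sqrt (dot3 a a).

Definition tens3 (a b : 'cV[R]_3) : 'M[R]_3 := a *m b^T.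

Definition chi_ball (eps : R) (x y : 'cV[R]_3) : R :=
  if enorm3 (y - x) < eps then 1 else 0.

Definition alpha_eps (eps : R) (x y : 'cV[R]_3) : 'cV[R]_3 :=
  (chi_ball eps x y / (enorm3 (y - x) ^+ 2)) *: (y - x).

(* Lebesgue measure on R^3, realized on (R * R) * R as a product measure *)
Definition vec3 (p : (R * R) * R) : 'cV[R]_3 :=
  \col_(i < 3) nth 0 [:: p.1.1; p.1.2; p.2] i.

Definition leb3 := ((@lebesgue_measure R \x @lebesgue_measure R) \x @lebesgue_measure R)%E.

Definition vint3 (F : 'cV[R]_3 -> 'cV[R]_3) : 'cV[R]_3 :=
  \col_(i < 3) Rintegral leb3 setT (fun p => F (vec3 p) i 0).

Definition vint3_conv (F : 'cV[R]_3 -> 'cV[R]_3) : Prop :=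
  forall i : 'I_3, leb3.-integrable setT (fun p => (F (vec3 p) i 0)%:E).

Variable alpha : 'cV[R]_3 -> 'cV[R]_3 -> 'cV[R]_3.

Definition Gstar (u : 'cV[R]_3 -> 'cV[R]_3) (x y : 'cV[R]_3) : R :=
  - dot3 (u y - u x) (alpha x y).
Definition Dstar (u : 'cV[R]_3 -> 'cV[R]_3) (x y : 'cV[R]_3) : 'M[R]_3 :=
  - tens3 (u y - u x) (alpha x y).

Definition G_integrand (eta : 'cV[R]_3 -> 'cV[R]_3 -> R) (x : 'cV[R]_3) :=
  fun y => (eta y x + eta x y) *: alpha x y.
Definition D_integrand (Psi : 'cV[R]_3 -> 'cV[R]_3 -> 'M[R]_3) (x : 'cV[R]_3) :=
  fun y => (Psi y x + Psi x y) *m alpha x y.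

Definition Gop (eta : 'cV[R]_3 -> 'cV[R]_3 -> R) (x : 'cV[R]_3) : 'cV[R]_3 :=
  vint3 (G_integrand eta x).
Definition Dop (Psi : 'cV[R]_3 -> 'cV[R]_3 -> 'M[R]_3) (x : 'cV[R]_3) : 'cV[R]_3 :=
  vint3 (D_integrand Psi x).

End Defs3.

From HB Require Import structures.
From mathcomp Require Import all_boot all_order all_algebra.
From mathcomp Require Import all_classical all_reals all_analysis.
Import Order.TTheory GRing.Theory Num.Theory.
Local Open Scope ring_scope.

(* The two integrands already agree pointwise in y: since alpha is antisymmetric,
   the contributions of (y, x) and (x, y) combine into c(y)(u(x) - u(y)) ⊗ alpha(x, y)
   and c(x)(u(x) - u(y)) ⊗ alpha(x, y), and transposing a tensor w ⊗ a and
   applying it to a gives (w · a) a. *)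

Section Tensor3.
Context {R : realType}.
Implicit Types a w : 'cV[R]_3.

Lemma trmx_mul_dot3 w a : w^T *m a = (dot3 w a)%:M.
Proof.
apply/matrixP => i j; rewrite !ord1 !mxE.
by apply: eq_bigr => k _; rewrite !mxE.
Qed.

Lemma tens3_trmx_mul w a : (tens3 w a)^T *m a = dot3 w a *: a.
Proof. by rewrite /tens3 trmx_mul trmxK -mulmxA trmx_mul_dot3 mul_mx_scalar. Qed.

Lemma tens3N w a : tens3 w (- a) = - tens3 w a.
Proof. by rewrite /tens3 linearN /= mulmxN. Qed.

Lemma dot3N w a : dot3 w (- a) = - dot3 w a.
Proof.
rewrite /dot3 -sumrN; apply: eq_bigr => i _.
by rewrite mxE mulrN.
Qed.

Lemma enorm3N a : enorm3 (- a) = enorm3 a.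
Proof.
rewrite /enorm3 /dot3; congr Num.sqrt; apply: eq_bigr => i _.
by rewrite !mxE mulrNN.
Qed.

Lemma alpha_eps_antisym (eps : R) x y : alpha_eps eps y x = - alpha_eps eps x y.
Proof. by rewrite /alpha_eps /chi_ball -opprB enorm3N scalerN. Qed.

Lemma D_integrand_Dstar_G_integrand_Gstar
    {alpha : 'cV[R]_3 -> 'cV[R]_3 -> 'cV[R]_3}
    (alpha_antisym : forall x y, alpha y x = - alpha x y)
    (c : 'cV[R]_3 -> R) (u : 'cV[R]_3 -> 'cV[R]_3) x :
  D_integrand alpha (fun x y => c x *: (Dstar alpha u x y)^T) x
  =1 G_integrand alpha (fun x y => c x * Gstar alpha u x y) x.
Proof.
move=> y; rewrite /D_integrand /G_integrand /Dstar /Gstar alpha_antisym.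
rewrite tens3N dot3N !linearN /= mulmxDl !mulNmx -!scalemxAl.
by rewrite !tens3_trmx_mul !opprK mulrN scalerDl !scalerA scaleNr.
Qed.

End Tensor3.

Theorem proposition4p3 (R : realType) (eps : R) (heps : 0 < eps)
  (c : 'cV[R]_3 -> R) (u : 'cV[R]_3 -> 'cV[R]_3) (x : 'cV[R]_3) :
  let alpha := alpha_eps eps in
  let Psi := fun x y => c x *: (Dstar alpha u x y)^T in
  let eta := fun x y => c x * Gstar alpha u x y in
  vint3_conv (D_integrand alpha Psi x) ->
  vint3_conv (G_integrand alpha eta x) ->
  Dop alpha Psi x = Gop alpha eta x.
Proof.
move=> alpha Psi eta _ _.
have integrands_eq :=
  D_integrand_Dstar_G_integrand_Gstar (alpha_eps_antisym eps) c u x.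
by rewrite /Dop /Gop; congr vint3; apply: funext.
Qed.
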